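(* Let $f,g\in\mathbb{F}[Y,Z]$. If $g$ has $r$ monomials, then $\mathrm{maxrank}(M_{fg})\le r\cdot\mathrm{maxrank}(M_f)$.
   Context: $\mathbb{F}$ is a field, $Y=\{y_1,\dots,y_m\}$ and $Z=\{z_1,\dots,z_m\}$ are disjoint sets of variables. For $f\in\mathbb{F}[Y,Z]$, the polynomial coefficient matrix $M_f$ is the $2^m\times 2^m$ matrix with entries in $\mathbb{F}[Y,Z]$, rows indexed by monic multilinear monomials $p$ in $Y$ and columns by monic multilinear monomials $q$ in $Z$, where $M_f(p,q)=G$ if and only if $f$ can be uniquely written as $f=pq\,G+Q$ with $G$ containing no variable other than those present in $p$ and $q$, and $Q$ having no monomial which is divisible by $pq$ and contains only variables present in $p$ and $q$. For $S:Y\cup Z\to\mathbb{F}$, $M_f|_S$ is obtained by evaluating each entry at $S$, and $\mathrm{maxrank}(M_f)=\max_S\mathrm{rank}(M_f|_S)$. *)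

From HB Require Import structures.
From mathcomp Require Import all_boot all_order all_algebra.
From mathcomp Require Export mpoly.
From Stdlib Require Import ClassicalDescription.
Set Implicit Arguments. Unset Strict Implicit. Unset Printing Implicit Defensive.
Import Order.TTheory GRing.Theory.
Local Open Scope ring_scope.

(* Variables: the polynomial ring F[Y,Z] with |Y| = |Z| = m is {mpoly F[m + m]};
   y_i is the variable lshift m i and z_i is rshift m i.
   A monic multilinear monomial in Y (resp. Z) is given by its set of variables
   P : {set 'I_m} (resp. Q : {set 'I_m}). *)

Definition pq_mnm (m : nat) (P Q : {set 'I_m}) : 'X_{1..m + m} :=
  [multinom (match split i with inl j => j \in P | inr j => j \in Q end : nat)
   | i < m + m].

(* Entry M_f(p,q) = G where f = p q G + Q is the unique decomposition of the
   context: the monomials t of f containing exactly the variables of p q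
   (i.e. divisible by pq and using only variables of p and q) give
   G = sum of f_t * t/(pq); all other monomials go into Q. *)
Definition pcm_entry (F : fieldType) (m : nat) (f : {mpoly F[m + m]})
    (P Q : {set 'I_m}) : {mpoly F[m + m]} :=
  \sum_(t <- msupp f | [forall i, (t i != 0%N) == (pq_mnm P Q i != 0%N)])
     f@_t *: 'X_[(t - pq_mnm P Q)%MM].

Definition pcm_size (m : nat) : nat := #|{set 'I_m}|.

Definition pcm (F : fieldType) (m : nat) (f : {mpoly F[m + m]}) :
    'M[{mpoly F[m + m]}]_(pcm_size m) :=
  \matrix_(i, j) pcm_entry f (enum_val i) (enum_val j).

Definition eval_mx (F : fieldType) (m n : nat) (S : 'I_(m + m) -> F)
    (M : 'M[{mpoly F[m + m]}]_n) : 'M[F]_n :=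
  map_mx (fun p => p.@[S]) M.

(* maxrank M = max_S rank (M|_S); ranks are bounded by n, so the maximum exists. *)
Definition maxrank (F : fieldType) (m n : nat) (M : 'M[{mpoly F[m + m]}]_n) : nat :=
  \max_(k < n.+1 | excluded_middle_informative
                     (exists S : 'I_(m + m) -> F, \rank (eval_mx S M) = k)) (k : nat).

From mathcomp Require Import all_boot all_order all_algebra.
From mathcomp Require Import mpoly.
From mathcomp Require Import zify.
From Stdlib Require Import ClassicalDescription.

Set Implicit Arguments.
Unset Strict Implicit.
Unset Printing Implicit Defensive.

Import GRing.Theory.
Local Open Scope ring_scope.

(* The map f |-> M_f is linear, and multiplying f by a monomial X^u transforms
   M_f into L_u M_f R_u for two fixed matrices L_u and R_u.  Writing
   f g = sum_u g_u f X^u over the r monomials of g, every evaluation of M_(fg)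
   is a sum of r matrices of rank at most rank (M_f|_S), hence of rank at most
   r * maxrank M_f. *)

Lemma split_lshift m n (j : 'I_m) : split (lshift n j) = inl j.
Proof. exact: (unsplitK (inl j)). Qed.

Lemma split_rshift m n (j : 'I_n) : split (rshift m j) = inr j.
Proof. exact: (unsplitK (inr j)). Qed.

Lemma eq_enum_rank (T : finType) (i : 'I_#|T|) (x : T) :
  (i == enum_rank x) = (enum_val i == x).
Proof. by apply/eqP/eqP => [->|<-]; rewrite ?enum_rankK ?enum_valK. Qed.

Lemma mulmx_delta_mx (R : pzSemiRingType) m n p q (A : 'M[R]_(m, n))
    (i : 'I_n) (j : 'I_p) (B : 'M[R]_(p, q)) :
  A *m delta_mx i j *m B = col i A *m row j B.
Proof. by rewrite -(mul_delta_mx (0 : 'I_1)) mulmxA -colE -mulmxA -rowE. Qed.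

Lemma mxrank_sum_le (F : fieldType) m n (I : Type) (r : seq I)
    (A : I -> 'M[F]_(m, n)) :
  (\rank (\sum_(i <- r) A i)%R <= \sum_(i <- r) \rank (A i))%N.
Proof.
elim: r => [|i r IHr]; first by rewrite !big_nil mxrank0.
by rewrite !big_cons (leq_trans (mxrank_add _ _)) ?leq_add2l.
Qed.

Section PolynomialCoefficientMatrix.
Variables (F : fieldType) (m : nat).
Local Notation polyYZ := {mpoly F[m + m]}.
Local Notation N := (pcm_size m).
Implicit Types (f g h : polyYZ) (t u : 'X_{1..m + m}) (P Q : {set 'I_m}).

Definition ysupp t := [set j : 'I_m | t (lshift m j) != 0%N].
Definition zsupp t := [set j : 'I_m | t (rshift m j) != 0%N].

Lemma ysuppD u t : ysupp (u + t)%MM = ysupp t :|: ysupp u.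
Proof. by apply/setP => j; rewrite !inE mnmDE addn_eq0 negb_and orbC. Qed.

Lemma zsuppD u t : zsupp (u + t)%MM = zsupp t :|: zsupp u.
Proof. by apply/setP => j; rewrite !inE mnmDE addn_eq0 negb_and orbC. Qed.

Lemma pq_mnm_lshift P Q j : pq_mnm P Q (lshift m j) = (j \in P) :> nat.
Proof. by rewrite mnmE split_lshift. Qed.

Lemma pq_mnm_rshift P Q j : pq_mnm P Q (rshift m j) = (j \in Q) :> nat.
Proof. by rewrite mnmE split_rshift. Qed.

Lemma pq_mnm_suppE t P Q :
  [forall i, (t i != 0%N) == (pq_mnm P Q i != 0%N)] =
  (P == ysupp t) && (Q == zsupp t).
Proof.
apply/forallP/andP => [sameP|[/eqP-> /eqP->] i].
  split; apply/eqP/setP => j; rewrite inE.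
    by move/eqP: (sameP (lshift m j)); rewrite pq_mnm_lshift; case: (j \in P).
  by move/eqP: (sameP (rshift m j)); rewrite pq_mnm_rshift; case: (j \in Q).
rewrite -(splitK i); case: (split i) => j /=.
  by rewrite pq_mnm_lshift inE; case: (_ != _).
by rewrite pq_mnm_rshift inE; case: (_ != _).
Qed.

Definition pcm_mnm t : 'M[polyYZ]_N :=
  'X_[t - pq_mnm (ysupp t) (zsupp t)] *:
    delta_mx (enum_rank (ysupp t)) (enum_rank (zsupp t)).

Lemma big_msupp_widen (V : zmodType) h (s : seq 'X_{1..m + m})
    (G : 'X_{1..m + m} -> V) :
  uniq s -> {subset msupp h <= s} -> (forall t, h@_t = 0 -> G t = 0) ->
  \sum_(t <- s) G t = \sum_(t <- msupp h) G t.
Proof.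
move=> uniq_s supp_s G0; rewrite (bigID (mem (msupp h))) /=.
rewrite [X in _ + X]big1 ?addr0 => [|t]; last first.
  by rewrite mcoeff_msupp negbK => /eqP/G0.
rewrite -big_filter; apply/perm_big/uniq_perm; rewrite ?filter_uniq ?msupp_uniq //.
by move=> t; rewrite mem_filter andb_idr //; apply: supp_s.
Qed.

Lemma pcm_expand h s : uniq s -> {subset msupp h <= s} ->
  pcm h = \sum_(t <- s) (h@_t)%:MP *: pcm_mnm t.
Proof.
move=> uniq_s supp_s; apply/matrixP => i j; rewrite !mxE summxE.
rewrite (big_msupp_widen uniq_s supp_s) => [|t ->]; last first.
  by rewrite !mxE mpolyC0 mul0r.
rewrite /pcm_entry big_mkcond; apply: eq_bigr => t _ /=.
rewrite pq_mnm_suppE !mxE !eq_enum_rank mul_mpolyC.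
by case: ifP => [/andP[/eqP-> /eqP->]|_]; rewrite ?mulr1 ?mulr0 ?scaler0.
Qed.

Lemma pcmD h1 h2 : pcm (h1 + h2) = pcm h1 + pcm h2.
Proof.
pose s := undup (msupp h1 ++ msupp h2).
have uniq_s : uniq s by apply: undup_uniq.
have supp1 : {subset msupp h1 <= s} by move=> t h1t; rewrite mem_undup mem_cat h1t.
have supp2 : {subset msupp h2 <= s}.
  by move=> t h2t; rewrite mem_undup mem_cat h2t orbT.
have supp12 : {subset msupp (h1 + h2) <= s}.
  by move=> t /msuppD_le; rewrite mem_undup.
rewrite !(pcm_expand uniq_s) // -big_split /=.
by apply: eq_bigr => t _; rewrite mcoeffD mpolyCD scalerDl.
Qed.

Lemma pcmZ c h : pcm (c *: h) = c%:MP *: pcm h.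
Proof.
rewrite (pcm_expand (msupp_uniq h) (@msuppZ_le _ _ c h)).
rewrite (pcm_expand (msupp_uniq h)) // scaler_sumr.
by apply: eq_bigr => t _; rewrite mcoeffZ mpolyCM scalerA.
Qed.

Lemma pcm_sum (I : Type) (r : seq I) (c : I -> F) (h : I -> polyYZ) :
  pcm (\sum_(i <- r) c i *: h i) = \sum_(i <- r) (c i)%:MP *: pcm (h i).
Proof.
elim: r => [|i r IHr]; last by rewrite !big_cons pcmD pcmZ IHr.
by rewrite !big_nil (@pcm_expand 0 [::]) ?big_nil // msupp0.
Qed.

(* Multiplying by X^u sends the entry of M_f at (B, C) to (B :|: ysupp u,
   C :|: zsupp u), multiplied by X^u divided by the variables that p and q
   gain; pcm_lmul u performs the Y-half of this on rows, pcm_rmul u the Z-half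
   on columns. *)
Definition ypart u : 'X_{1..m + m} :=
  [multinom (if split i is inl _ then u i else 0%N) | i < m + m].
Definition zpart u : 'X_{1..m + m} :=
  [multinom (if split i is inr _ then u i else 0%N) | i < m + m].

Definition pcm_lmul u : 'M[polyYZ]_N := \matrix_(i, k)
  if enum_val k :|: ysupp u == enum_val i
  then 'X_[ypart u - pq_mnm (enum_val i :\: enum_val k) set0] else 0.

Definition pcm_rmul u : 'M[polyYZ]_N := \matrix_(k, j)
  if enum_val k :|: zsupp u == enum_val j
  then 'X_[zpart u - pq_mnm set0 (enum_val j :\: enum_val k)] else 0.

Lemma mnmD_sub_pq_mnm u t P Q :
  P = ysupp t :|: ysupp u -> Q = zsupp t :|: zsupp u ->
  (u + t - pq_mnm P Q =
   t - pq_mnm (ysupp t) (zsupp t) + (ypart u - pq_mnm (P :\: ysupp t) set0)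
     + (zpart u - pq_mnm set0 (Q :\: zsupp t)))%MM.
Proof.
move=> -> ->; apply/mnmP => k; rewrite !(mnmDE, mnmBE) !mnmE.
rewrite -(splitK k); case: (split k) => j /=;
  rewrite ?(split_lshift, split_rshift) !inE;
  by case: (u _) => [|a]; case: (t _) => [|b] /=; rewrite ?orbF ?orbT /=; lia.
Qed.

Lemma pcm_mnmD u t : pcm_mnm (u + t)%MM = pcm_lmul u *m pcm_mnm t *m pcm_rmul u.
Proof.
rewrite /pcm_mnm -scalemxAr -scalemxAl mulmx_delta_mx.
apply/matrixP => i j; rewrite !mxE big_ord1 !mxE !enum_rankK !eq_enum_rank.
rewrite ysuppD zsuppD [_ == enum_val i]eq_sym [_ == enum_val j]eq_sym.
case: eqP => [eP|_]; last by rewrite mul0r !mulr0.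
case: eqP => [eQ|_]; last by rewrite !mulr0.
by rewrite mulr1 -eP -eQ (mnmD_sub_pq_mnm eP eQ) !mpolyXD mulrA.
Qed.

Lemma pcm_mulX f u : pcm (f * 'X_[u]) = pcm_lmul u *m pcm f *m pcm_rmul u.
Proof.
have supp_fu := perm_mem (msuppMX f u).
rewrite (pcm_expand (s := [seq (u + t)%MM | t <- msupp f])); first last.
- by move=> t; rewrite supp_fu.
- by rewrite -(perm_uniq (msuppMX f u)) msupp_uniq.
rewrite (pcm_expand (msupp_uniq f)) // mulmx_sumr mulmx_suml big_map.
by apply: eq_bigr => t _; rewrite mcoeffMX -scalemxAr -scalemxAl pcm_mnmD.
Qed.

Lemma pcm_mul f g :
  pcm (f * g) = \sum_(u <- msupp g)
                  (g@_u)%:MP *: (pcm_lmul u *m pcm f *m pcm_rmul u).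
Proof.
rewrite {1}(mpolyE g) mulr_sumr; under eq_bigr do rewrite -scalerAr.
by rewrite pcm_sum; apply: eq_bigr => u _; rewrite pcm_mulX.
Qed.

Lemma rank_eval_le_maxrank S (M : 'M[polyYZ]_N) :
  (\rank (eval_mx S M) <= maxrank M)%N.
Proof.
have rank_lt : (\rank (eval_mx S M) < N.+1)%N by rewrite ltnS rank_leq_row.
apply: (@leq_bigmax_cond _ _ _ (Ordinal rank_lt)) => /=.
by case: excluded_middle_informative => // noS; case: noS; exists S.
Qed.

Lemma rank_eval_pcm_mul f g S :
  (\rank (eval_mx S (pcm (f * g))) <= size (msupp g) * maxrank (pcm f))%N.
Proof.
rewrite pcm_mul /eval_mx raddf_sum (leq_trans (mxrank_sum_le _ _)) //.
rewrite -sum1_size big_distrl leq_sum // => u _ /=; rewrite mul1n.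
rewrite map_mxZ -mul_scalar_mx !map_mxM.
rewrite (leq_trans (mxrankM_maxr _ _)) // (leq_trans (mxrankM_maxl _ _)) //.
exact: leq_trans (mxrankM_maxr _ _) (rank_eval_le_maxrank _ _).
Qed.

End PolynomialCoefficientMatrix.

Theorem corollary3 (F : fieldType) (m : nat) (f g : {mpoly F[m + m]}) (r : nat) :
  size (msupp g) = r ->
  (maxrank (pcm (f * g)) <= r * maxrank (pcm f))%N.
Proof.
move=> <-; apply/bigmax_leqP => k.
case: excluded_middle_informative => // [[S rankS]] _; rewrite -rankS.
exact: rank_eval_pcm_mul.
Qed.
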